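(* There is no binary linear $[n,k,d]$ code $C$ with $\mathbf{1}_n\in C$ such that, for some positive integer $t$, $$d^\perp-t=\#\{u \mid C_u\neq\emptyset,\ 0<u\le n-t\}=3,$$ the nonzero weights of $C$ are exactly $d,\ n/2,\ n-d,\ n$ (with $n$ even), and $d^\perp>8$.
   Context: $\mathbf{1}_n$ is the all-ones vector; $C^\perp$ is the dual code with respect to the standard inner product and $d^\perp$ its minimum nonzero weight; $C_u=\{c\in C:\mathrm{wt}(c)=u\}$ (Hamming weight). The paper notes that in the case $d^\perp-t=3$ the weight distribution of $C$ is supported on $0,d,n/2,n-d,n$ with $n$ even, and works under this assumption throughout. *)

From mathcomp Require Import all_boot all_order all_algebra.
Set Implicit Arguments. Unset Strict Implicit. Unset Printing Implicit Defensive.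
Import GRing.Theory.
Local Open Scope ring_scope.

Definition wt (n : nat) (v : 'rV['F_2]_n) : nat := #|[set i | v 0 i != 0]|.

(* C is a binary linear code: contains 0 and is closed under addition
   (over F_2 this is the same as being an F_2-subspace). *)
Definition linear_code (n : nat) (C : {set 'rV['F_2]_n}) : bool :=
  (0 \in C) && [forall x in C, forall y in C, x + y \in C].

Definition dual_code (n : nat) (C : {set 'rV['F_2]_n}) : {set 'rV['F_2]_n} :=
  [set y | [forall x in C, (x *m y^T) 0 0 == 0]].

Definition ones (n : nat) : 'rV['F_2]_n := const_mx 1.

Definition min_nz_weight (n : nat) (S : {set 'rV['F_2]_n}) (m : nat) : Prop :=
  (exists2 x, x \in S & (x != 0) && (wt x == m)%N) /\
  (forall x, x \in S -> x != 0 -> (m <= wt x)%N).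

Definition num_weights_upto (n : nat) (C : {set 'rV['F_2]_n}) (t : nat) : nat :=
  #|[set u : 'I_n.+1 | [&& [exists c in C, wt c == u], (0 < u)%N & (u <= n - t)%N]]|.

From mathcomp Require Import all_boot all_order all_algebra.
From mathcomp Require Import ring lra zify.
Set Implicit Arguments. Unset Strict Implicit. Unset Printing Implicit Defensive.
Import Order.TTheory GRing.Theory Num.Theory.
Local Open Scope ring_scope.

(* Since the dual distance exceeds 8, character sums over C vanish at every
   nonzero word of weight at most 8, so C is an orthogonal array of strength 8:
   for |T| < d^perp, exactly |C| / 2^|T| codewords have support containing T.
   Counting pairs (c, T) then shows that the power moments of order at most 8
   of the bias n - 2 wt(c) over C are those of a sum of n independent uniform
   signs.  On the other hand the weight set forces every bias to be a root of
   x^2 (x^2 - n^2) (x^2 - (n - 2d)^2).  Averaging this polynomial, and x^2 times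
   it, over C gives (n - 2d)^2 = 3n - 8 and then n (n-1) (n-2) (n-3) (n-4) = 0,
   which is impossible because n >= d^perp > 8. *)

Lemma F2_cases (a : 'F_2) : a = 0 \/ a = 1.
Proof. by case: a => [[|[|//]]] Ha; [left|right]; apply/val_inj. Qed.

Lemma F2_neq0 (a : 'F_2) : a != 0 -> a = 1.
Proof. by case: (F2_cases a) => ->; rewrite ?eqxx. Qed.

Lemma F2_addrr (a : 'F_2) : a + a = 0.
Proof. exact/addrr_pchar2/pchar_Fp. Qed.

Definition chi (b : 'F_2) : rat := if b == 0 then 1 else -1.

Lemma chiD a b : chi (a + b) = chi a * chi b.
Proof. by case: (F2_cases a) => ->; case: (F2_cases b) => ->; rewrite /chi. Qed.

Definition dot n (x y : 'rV['F_2]_n) : 'F_2 := (x *m y^T) 0 0.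

Definition supp n (c : 'rV['F_2]_n) : {set 'I_n} := [set i | c 0 i != 0].

Definition indic n (J : {set 'I_n}) : 'rV['F_2]_n := \row_k (k \in J)%:R.

Lemma dot_indic n (c : 'rV['F_2]_n) J : dot c (indic J) = \sum_(k in J) c 0 k.
Proof.
rewrite /dot mxE [RHS]big_mkcond /=; apply: eq_bigr => k _.
by rewrite !mxE; case: (k \in J); rewrite ?mulr1 ?mulr0.
Qed.

Lemma wt_max n (v : 'rV['F_2]_n) : (wt v <= n)%N.
Proof. by rewrite -[leqRHS]card_ord max_card. Qed.

Lemma wt_indic n (J : {set 'I_n}) : wt (indic J) = #|J|.
Proof.
by apply: eq_card => k; rewrite !inE mxE; case: (k \in J); rewrite ?oner_eq0.
Qed.

Lemma wt_eq0 n (v : 'rV['F_2]_n) : (wt v == 0%N) = (v == 0).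
Proof.
rewrite cards_eq0; apply/eqP/eqP => [v0|->];
  last by apply/setP => i; rewrite !inE mxE eqxx.
by apply/rowP => i; apply/eqP; have /setP/(_ i) := v0; rewrite !inE mxE => /negbFE.
Qed.

Lemma indic_eq0 n (J : {set 'I_n}) : (indic J == 0) = (J == set0).
Proof. by rewrite -wt_eq0 wt_indic cards_eq0. Qed.

Lemma chi_sum (I : finType) (P : pred I) (F : I -> 'F_2) :
  chi (\sum_(i | P i) F i) = \prod_(i | P i) chi (F i).
Proof. exact: (big_morph chi chiD). Qed.

Lemma prod_one_sub_chi n (c : 'rV['F_2]_n) (T : {set 'I_n}) :
  \prod_(i in T) (1 - chi (c 0 i)) = (T \subset supp c)%:R * 2 ^+ #|T|.
Proof.
have [Tc|/subsetPn[i iT]] := boolP (T \subset supp c).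
  rewrite mul1r -prodr_const; apply: eq_bigr => i /(subsetP Tc).
  by rewrite inE => /F2_neq0 ->; rewrite /chi opprK.
by rewrite inE negbK (bigD1 i) //= => /eqP ->; rewrite /chi eqxx subrr !mul0r.
Qed.

Lemma prod_one_sub_chi_expand n (c : 'rV['F_2]_n) (T : {set 'I_n}) :
  \prod_(i in T) (1 - chi (c 0 i)) =
  \sum_(J : {set 'I_n} | J \subset T) (-1) ^+ #|J| * chi (dot c (indic J)).
Proof.
rewrite big_mkcond /=.
rewrite (eq_bigr (fun i => (if i \in T then - chi (c 0 i) else 0) + 1)) => [|i _];
  last by case: ifP; rewrite ?add0r // addrC.
rewrite (_ : \prod_i _ = \sum_(J : {set 'I_n}) \prod_i (if i \in J then
    if i \in T then - chi (c 0 i) else 0 else 1)); last exact: bigA_distr.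
rewrite [LHS](bigID (fun J : {set 'I_n} => J \subset T)) /=.
rewrite [X in _ + X]big1 ?addr0 => [|J /subsetPn[i iJ iT]].
  apply: eq_bigr => J JT; rewrite dot_indic chi_sum -prodrN -big_mkcond /=.
  by apply: eq_bigr => i iJ; rewrite (subsetP JT).
by rewrite (bigD1 i) //= iJ (negbTE iT) mul0r.
Qed.

Section FallingExpansion.

Variable R : comPzRingType.

Fixpoint falling (w : R) (j : nat) : R :=
  if j is j'.+1 then falling w j' * (w - j'%:R) else 1.

(* Coefficients of (x - 2w)^k in the falling factorial basis in w; the
   recursion comes from (x - 2w) (w)_j = (x - 2j) (w)_j - 2 (w)_(j+1). *)
Fixpoint bias_coef (x : R) (k j : nat) : R :=
  if k is k'.+1 then
    (x - 2 * j%:R) * bias_coef x k' j - (if j is j'.+1 then 2 * bias_coef x k' j' else 0)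
  else (j == 0%N)%:R.

Lemma bias_coef_small x k j : (k < j)%N -> bias_coef x k j = 0.
Proof.
elim: k j => [|k IHk] [|j] //= kj.
by rewrite !IHk ?mulr0 ?subrr // ltnW.
Qed.

Lemma expand_bias_pow x w k :
  (x - 2 * w) ^+ k = \sum_(j < k.+1) bias_coef x k j * falling w j.
Proof.
elim: k => [|k IHk]; first by rewrite big_ord1 /= mulr1.
pose A j := (x - 2 * j%:R) * bias_coef x k j * falling w j.
have step j : (x - 2 * w) * (bias_coef x k j * falling w j) =
              A j - 2 * bias_coef x k j * falling w j.+1 by rewrite /A /=; ring.
have A_top : \sum_(j < k.+1) A j = \sum_(j < k.+2) A j.
  by rewrite [RHS]big_ord_recr /= /A bias_coef_small // mulr0 mul0r addr0.
rewrite exprS IHk mulr_sumr; under eq_bigr => j _ do rewrite step.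
rewrite sumrB A_top.
rewrite big_ord_recl [RHS]big_ord_recl -addrA -sumrB /A /=; congr (_ + _).
  by rewrite subr0.
by apply: eq_bigr => i _; rewrite add0n; ring.
Qed.

End FallingExpansion.

Lemma falling_nat (w j : nat) : falling (w%:R : rat) j = (w ^_ j)%:R.
Proof.
elim: j => [|j IHj] //=; rewrite IHj ffactnSr natrM.
have [jw|wj] := leqP j w; first by rewrite natrB.
by rewrite ffact_small ?mul0r.
Qed.

Definition bias n (c : 'rV['F_2]_n) : rat := n%:R - 2 * (wt c)%:R.

(* For a natural number x this is the k-th moment of a sum of x independent
   uniform signs: its number of minus signs is binomial with factorial moments
   (x)_j / 2^j. *)
Definition rademacher_moment (x : rat) k : rat :=
  \sum_(j < k.+1) bias_coef x k j * falling x j / 2 ^+ j.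

Lemma rademacher_moment2 x : rademacher_moment x 2 = x.
Proof. by rewrite /rademacher_moment !big_ord_recr big_ord0 /=; field. Qed.

Lemma rademacher_moment4 x : rademacher_moment x 4 = 3 * x ^+ 2 - 2 * x.
Proof. by rewrite /rademacher_moment !big_ord_recr big_ord0 /=; field. Qed.

Lemma rademacher_moment6 x :
  rademacher_moment x 6 = 15 * x ^+ 3 - 30 * x ^+ 2 + 16 * x.
Proof. by rewrite /rademacher_moment !big_ord_recr big_ord0 /=; field. Qed.

Lemma rademacher_moment8 x :
  rademacher_moment x 8 = 105 * x ^+ 4 - 420 * x ^+ 3 + 588 * x ^+ 2 - 272 * x.
Proof. by rewrite /rademacher_moment !big_ord_recr big_ord0 /=; field. Qed.

Lemma rademacher_moments_no_annihilator (x Y : rat) : 4 < x ->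
  rademacher_moment x 6 - (x ^+ 2 + Y) * rademacher_moment x 4 +
    x ^+ 2 * Y * rademacher_moment x 2 = 0 ->
  rademacher_moment x 8 - (x ^+ 2 + Y) * rademacher_moment x 6 +
    x ^+ 2 * Y * rademacher_moment x 4 = 0 -> False.
Proof.
rewrite rademacher_moment2 rademacher_moment4 rademacher_moment6 rademacher_moment8.
move=> x_gt4 E6 E8.
have p3_gt0 : 0 < x * (x - 1) * (x - 2) by repeat apply: mulr_gt0; lra.
have /eqP : Y - (3 * x - 8) = 0.
  by apply: (mulfI (lt0r_neq0 p3_gt0)); rewrite mulr0 -E6; ring.
rewrite subr_eq0 => /eqP Y_eq; subst Y.
have p5_gt0 : 0 < 6 * (x * (x - 1) * (x - 2) * (x - 3) * (x - 4)).
  by rewrite pmulr_rgt0 //; repeat apply: mulr_gt0; lra.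
have /eqP : 6 * (x * (x - 1) * (x - 2) * (x - 3) * (x - 4)) = 0.
  by rewrite -oppr0 -E8; ring.
by rewrite gt_eqF.
Qed.

Lemma bias_annihilator n (c : 'rV['F_2]_n) d : ~~ odd n -> (d <= n)%N ->
  wt c \in [:: 0%N; d; n./2; (n - d)%N; n] ->
  bias c ^+ 2 * (bias c ^+ 2 - n%:R ^+ 2) * (bias c ^+ 2 - (n%:R - 2 * d%:R) ^+ 2) = 0.
Proof.
move=> n_even d_le_n; rewrite /bias !inE => /orP[|/or4P[]] /eqP->; try ring.
  by rewrite -{1 3 5}(even_halfK n_even) -muln2 natrM; ring.
by rewrite natrB //; ring.
Qed.

Section BinaryLinearCode.

Variables (n : nat) (C : {set 'rV['F_2]_n}).
Hypothesis linC : linear_code C.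

Lemma sum_chi_dot_notin_dual y :
  y \notin dual_code C -> \sum_(c in C) chi (dot c y) = 0.
Proof.
case/andP: linC => _ /forall_inP addC.
rewrite inE negb_forall_in => /existsP[x /andP[xC /F2_neq0 xy]].
have CDx c : (c + x \in C) = (c \in C).
  apply/idP/idP => [/addC/forall_inP/(_ _ xC)|/addC/forall_inP/(_ _ xC)] //.
  rewrite -addrA (_ : x + x = 0) ?addr0 //.
  by apply/matrixP => i j; rewrite !mxE F2_addrr.
set S := \sum_(c in C) _.
have SN : S = - S.
  rewrite {1}/S (reindex_inj (addIr x)) /= (eq_bigl _ _ CDx) -sumrN.
  by apply: eq_bigr => c _; rewrite /dot mulmxDl mxE chiD xy mulrN1.
have /eqP : S *+ 2 = 0 by rewrite mulr2n {2}SN subrr.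
by rewrite mulrn_eq0 => /eqP.
Qed.

Variable dp : nat.
Hypothesis dual_wt : forall y, y \in dual_code C -> y != 0 -> (dp <= wt y)%N.

Lemma card_codewords_supp_supset (T : {set 'I_n}) :
  (#|T| < dp)%N -> (#|[set c in C | T \subset supp c]| * 2 ^ #|T|)%N = #|C|.
Proof.
move=> Tdp; apply/eqP; rewrite -(eqr_nat rat) natrM natrX; apply/eqP.
transitivity (\sum_(c in C) \prod_(i in T) (1 - chi (c 0 i))).
  under eq_bigr => c _ do rewrite prod_one_sub_chi.
  rewrite -mulr_suml -natr_sum -big_mkcondr /= sum1_card.
  by congr (_%:R * _); apply: eq_card => c; rewrite inE.
under eq_bigr => c _ do rewrite prod_one_sub_chi_expand.
rewrite exchange_big (bigD1 set0) ?sub0set //=.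
rewrite [X in _ + X]big1 ?addr0 => [|J /andP[JT J0]].
  by rewrite -sumr_const; apply: eq_bigr => c _; rewrite cards0 mul1r dot_indic big_set0.
rewrite -mulr_sumr sum_chi_dot_notin_dual ?mulr0 //; apply: contraTN Tdp => /dual_wt.
by rewrite -leqNgt indic_eq0 wt_indic => /(_ J0) /leq_trans->; rewrite ?subset_leq_card.
Qed.

Lemma sum_binomial_wt j :
  (j < dp)%N -> (2 ^ j * \sum_(c in C) 'C(wt c, j) = #|C| * 'C(n, j))%N.
Proof.
move=> jdp.
have cardE (I : finType) (A : {set I}) : #|A| = (\sum_i (i \in A : nat))%N.
  by rewrite -sum1_card big_mkcond.
have -> : (\sum_(c in C) 'C(wt c, j) =
           \sum_(T : {set 'I_n} | #|T| == j) #|[set c in C | T \subset supp c]|)%N.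
  under eq_bigr => c _ do rewrite -[wt c]/#|supp c| -cards_draws cardE.
  rewrite exchange_big [RHS]big_mkcond /=; apply: eq_bigr => T _.
  rewrite (cardE _ [set c in C | _]) big_mkcond /=.
  case Tj: (#|T| == j); last by rewrite big1 // => c _; rewrite !inE Tj andbF if_same.
  by apply: eq_bigr => c _; rewrite !inE Tj andbT; case: (c \in C).
rewrite big_distrr /=.
under eq_bigr => T /eqP Tj do rewrite mulnC -Tj card_codewords_supp_supset ?Tj //.
rewrite sum_nat_const mulnC; congr (_ * _)%N.
rewrite -[in RHS](card_ord n) -card_draws.
by apply: eq_card => T; rewrite inE.
Qed.

Lemma sum_falling_wt j : (j < dp)%N ->
  2 ^+ j * \sum_(c in C) falling (wt c)%:R j = #|C|%:R * falling (n%:R : rat) j.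
Proof.
move=> jdp; under eq_bigr => c _ do rewrite falling_nat.
rewrite falling_nat -natr_sum -natrX -!natrM; congr _%:R.
under eq_bigr => c _ do rewrite -bin_ffact.
by rewrite -big_distrl /= mulnA sum_binomial_wt // -mulnA bin_ffact.
Qed.

Lemma sum_bias_pow k : (k < dp)%N ->
  \sum_(c in C) bias c ^+ k = #|C|%:R * rademacher_moment n%:R k.
Proof.
move=> kdp; under eq_bigr => c _ do rewrite /bias expand_bias_pow.
rewrite exchange_big /rademacher_moment mulr_sumr; apply: eq_bigr => j _ /=.
have jdp : (j < dp)%N := leq_trans (ltn_ord j) kdp.
rewrite -mulr_sumr.
have -> : \sum_(c in C) falling (wt c)%:R j = #|C|%:R * falling (n%:R : rat) j / 2 ^+ j.
  by rewrite -(sum_falling_wt jdp) mulrC mulKf // expf_neq0.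
by rewrite !mulrA [_ * #|C|%:R]mulrC.
Qed.

Lemma rademacher_moments_annihilated a b k : (k.+4 < dp)%N ->
  (forall c, c \in C -> bias c ^+ k * (bias c ^+ 4 - a * bias c ^+ 2 + b) = 0) ->
  rademacher_moment n%:R k.+4 - a * rademacher_moment n%:R k.+2 +
    b * rademacher_moment n%:R k = 0.
Proof.
move=> kdp annihil; have C_neq0 : #|C|%:R != 0 :> rat.
  by rewrite pnatr_eq0 -lt0n; apply/card_gt0P; exists 0; case/andP: linC.
have distr x :
    x ^+ k * (x ^+ 4 - a * x ^+ 2 + b) = x ^+ k.+4 - a * x ^+ k.+2 + b * x ^+ k.
  by rewrite !exprS; ring.
have /eqP : \sum_(c in C) bias c ^+ k * (bias c ^+ 4 - a * bias c ^+ 2 + b) = 0.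
  exact: big1.
under eq_bigr => c _ do rewrite distr.
rewrite big_split sumrB /= -!mulr_sumr !sum_bias_pow => [/eqP sum0|||]; try lia.
by apply: (mulfI C_neq0); rewrite mulr0 -sum0; ring.
Qed.

End BinaryLinearCode.

Theorem theorem4p2 :
  ~ (exists (n : nat) (C : {set 'rV['F_2]_n}) (d dperp t : nat),
      [/\ linear_code C, ones n \in C, min_nz_weight C d,
          min_nz_weight (dual_code C) dperp & (0 < t)%N] /\
      [/\ dperp = (t + 3)%N, num_weights_upto C t = 3%N, ~~ odd n,
          (forall w : nat, (exists2 c, c \in C & (c != 0) && (wt c == w)%N) <->
                           w \in [:: d; n./2; (n - d)%N; n]) &
          (8 < dperp)%N]).
Proof.
move=> [n [C [d [dp [t [[linC _ [[c0 c0C /andP[_ /eqP c0_wt]] _]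
  [[y yD /andP[_ /eqP y_wt]] dual_wt] _] [_ _ n_even weightsP dp_gt8]]]]]]].
have n_gt4 : 4 < n%:R :> rat by rewrite ltr_nat; have := wt_max y; lia.
have d_le_n : (d <= n)%N by rewrite -c0_wt wt_max.
have wtC c : c \in C -> wt c \in [:: 0%N; d; n./2; (n - d)%N; n].
  have [-> _|c_neq0 cC] := eqVneq c 0; first by rewrite inE wt_eq0 eqxx.
  by rewrite in_cons; apply/orP; right; apply/weightsP; exists c; rewrite ?c_neq0 ?eqxx.
pose Y : rat := (n%:R - 2 * d%:R) ^+ 2.
have annih k c : c \in C -> bias c ^+ k.+2 *
    (bias c ^+ 4 - (n%:R ^+ 2 + Y) * bias c ^+ 2 + n%:R ^+ 2 * Y) = 0.
  move/wtC/(bias_annihilator n_even d_le_n) => P0.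
  by rewrite -[RHS](mulr0 (bias c ^+ k)) -P0 !exprS /Y; ring.
apply: (rademacher_moments_no_annihilator n_gt4).
  by apply: (rademacher_moments_annihilated linC dual_wt) (annih 0%N); lia.
by apply: (rademacher_moments_annihilated linC dual_wt) (annih 2%N); lia.
Qed.
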